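(* Let $t\geq 3$ and let $(a_1,\dots,a_t,n_1,n_2)$ be integers with $a_1\geq\cdots\geq a_t\geq 2$, $n_1\geq n_2\geq 2$, $a_l\neq n_j$ for all $l,j$, and $\prod_{l=1}^t a_l!=n_1!n_2!$. Suppose $n_1>a_1$ and $n_2>a_i$ for some $2\leq i\leq t$. Put $m_1=a_1+1$, $k_1=n_1-a_1$, $m_2=a_i+1$, $k_2=n_2-a_i$, and $\Delta(m,k)=m(m+1)\cdots(m+k-1)$, so that $\prod_{l\neq 1,i}a_l!=\Delta(m_1,k_1)\Delta(m_2,k_2)$. Then: (i) none of the integers $m_1,m_1+1,\dots,m_1+k_1-1$ is a prime; (ii) with $a=\max_{l\neq 1,i}a_l$, one has $$a\log(a)-a\leq\log(a!)\leq (k_1+k_2)\log(2m_1).$$ *)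

From mathcomp Require Export all_boot.
From Stdlib Require Export Reals.

Definition Delta (m k : nat) : nat := \prod_(0 <= j < k) (m + j).

From Stdlib Require Import Lra.
From mathcomp Require Import zify.

(* Cancelling a_1! and a_i! in the factorial identity leaves
   prod_{l <> 1, i} a_l! = Delta(m1, k1) Delta(m2, k2).
   (i) A prime m1 + j <= n1 divides n1!, hence some a_l!, hence is at most
   a_l <= a_1 < m1: impossible.
   (ii) The lower bound is the elementary Stirling estimate, obtained by
   telescoping n ln(1 + 1/n) <= 1.  For the upper bound, a <= a_1 < m1.  If
   a <= k1 + k2 then a! <= a^a <= (2 m1)^(k1 + k2); otherwise every factor of
   both Delta's is below m1 + a <= 2 m1, and a! is at most their product. *)

Lemma ln_le (x y : R) : (0 < x -> x <= y -> ln x <= ln y)%R.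
Proof.
move=> x_gt0 [x_lt_y | ->]; last by right.
by left; apply: ln_increasing.
Qed.

Lemma ln_le_sub1 (x : R) : (0 < x -> ln x <= x - 1)%R.
Proof.
move=> x_gt0; rewrite -[(x - 1)%R]ln_exp; apply: ln_le => //.
by have := exp_ineq1_le (x - 1); lra.
Qed.

Lemma mul_ln_succ_sub_le1 (x : R) : (0 < x -> x * (ln (x + 1) - ln x) <= 1)%R.
Proof.
move=> x_gt0; have inv_gt0 : (0 < / x)%R by apply: Rinv_0_lt_compat.
have -> : (x + 1 = x * (1 + / x))%R by field; lra.
rewrite ln_mult; [|lra|lra].
have := ln_le_sub1 (1 + / x) ltac:(lra); have := Rinv_r x; nra.
Qed.

Lemma INR_fact_gt0 (n : nat) : (0 < INR n`!)%R.
Proof. by apply: lt_0_INR; apply/ltP; exact: fact_gt0. Qed.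

Lemma ln_fact_ge (n : nat) : (INR n * ln (INR n) - INR n <= ln (INR n`!))%R.
Proof.
elim: n => [|[|n] IHn]; try by rewrite /= ln_1; lra.
have n1_gt0 : (0 < INR n.+1)%R by apply: lt_0_INR; lia.
rewrite factS mulnE mult_INR ln_mult; [|by apply: lt_0_INR; lia|exact: INR_fact_gt0].
rewrite [INR n.+2]S_INR; have := mul_ln_succ_sub_le1 _ n1_gt0; nra.
Qed.

(* With Reals loaded, [_ ^ _] on nat is [Nat.pow]; MathComp's power is [expn]. *)
Lemma INR_expn (m n : nat) : INR (expn m n) = (INR m ^ n)%R.
Proof. by elim: n => [|n IHn]; rewrite ?expnS ?mulnE ?mult_INR ?IHn. Qed.

Lemma ln_INR_le_expn (m c k : nat) :
  0 < m -> 0 < c -> m <= expn c k -> (ln (INR m) <= INR k * ln (INR c))%R.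
Proof.
move=> m_gt0 c_gt0 m_le; rewrite -ln_pow; last by apply: lt_0_INR; lia.
rewrite -INR_expn; apply: ln_le; first by apply: lt_0_INR; lia.
by apply: le_INR; lia.
Qed.

Lemma big_nat_D2 (T : Type) (idx : T) (op : SemiGroup.com_law T)
    (m n j i : nat) (F : nat -> T) :
  m <= j < n -> m <= i < n -> j != i ->
  \big[op/idx]_(m <= l < n) F l =
  op (F j) (op (F i) (\big[op/idx]_(m <= l < n | (l != j) && (l != i)) F l)).
Proof.
move=> hj hi hji; have uniq_iota : uniq (index_iota m n) by exact: iota_uniq.
rewrite (bigD1_seq j) ?mem_index_iota //; congr (op _ _).
rewrite -big_filter (bigD1_seq i) ?filter_uniq ?mem_filter ?mem_index_iota
  1?eq_sym ?hi ?hji //=.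
by rewrite big_filter_cond.
Qed.

Lemma fact_addn_Delta (m k : nat) : (m + k)`! = m`! * Delta m.+1 k.
Proof.
rewrite (fact_split (leq_addr k m)) /Delta -{1}[m.+1]add0n big_addn.
by rewrite subSS addKn; under eq_bigr do rewrite addnC.
Qed.

Lemma Delta_leq_expn (m k c : nat) :
  (forall j, j < k -> m + j <= c) -> Delta m k <= expn c k.
Proof.
move=> le_c; rewrite /Delta -[X in expn c X]subn0 -prod_nat_const_nat.
rewrite big_nat_cond [X in _ <= X]big_nat_cond.
by apply: leq_prod => j /andP[/andP[_ /le_c]].
Qed.

Lemma fact_leq_expn (n : nat) : n`! <= expn n n.
Proof.
rewrite fact_prod -[X in expn n X]subn0 -(subSS 0 n) -prod_nat_const_nat.
rewrite big_nat_cond [X in _ <= X]big_nat_cond.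
by apply: leq_prod => j /andP[/andP[_]].
Qed.

Lemma prime_dvd_fact (p n : nat) : prime p -> (p %| n`!) = (p <= n).
Proof.
move=> p_pr; apply/idP/idP => [|p_le]; last by apply: dvdn_fact; rewrite prime_gt0.
elim: n => [|n IHn]; first by rewrite dvdn1 => /eqP p1; rewrite p1 in p_pr.
by rewrite factS Euclid_dvdM // => /orP[/dvdn_leq-> // | /IHn /leqW].
Qed.

Lemma fact_bigmax_leq_prod (I : Type) (r : seq I) (P : pred I) (f : I -> nat) :
  (\max_(l <- r | P l) f l)`! <= \prod_(l <- r | P l) (f l)`!.
Proof.
apply: (big_ind2 (fun x y => x`! <= y)) => // n1 p1 n2 p2 le1 le2.
have p1_gt0 : 0 < p1 := leq_trans (fact_gt0 n1) le1.
have p2_gt0 : 0 < p2 := leq_trans (fact_gt0 n2) le2.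
case: (leqP n1 n2) => _.
  exact: leq_trans le2 (leq_pmull _ p1_gt0).
exact: leq_trans le1 (leq_pmulr _ p2_gt0).
Qed.

Lemma fact_leq_expn_of_large (n c k : nat) :
  0 < c -> n <= c -> (k < n -> n`! <= expn c k) -> n`! <= expn c k.
Proof.
move=> c_gt0 n_le_c; case: (leqP n k) => [n_le_k _ | _ ->] //.
apply: leq_trans (fact_leq_expn n) _; apply: leq_trans _ (leq_pexp2l c_gt0 n_le_k).
by case: n n_le_c {n_le_k} => // n; rewrite leq_exp2r.
Qed.

Section FactorialIdentity.

Variables (t n1 n2 i : nat) (a : nat -> nat).
Hypothesis a_noninc : forall l, 1 <= l < t -> a l.+1 <= a l.
Hypothesis prod_fact : \prod_(1 <= l < t.+1) (a l)`! = n1`! * n2`!.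
Hypothesis a1_lt_n1 : a 1 < n1.
Hypothesis i_range : 2 <= i <= t.
Hypothesis ai_lt_n2 : a i < n2.

Local Notation m1 := (a 1).+1.
Local Notation k1 := (n1 - a 1).
Local Notation m2 := (a i).+1.
Local Notation k2 := (n2 - a i).
Local Notation amax := (\max_(1 <= l < t.+1 | (l != 1) && (l != i)) a l).

Lemma a_le_a1 (l : nat) : 1 <= l <= t -> a l <= a 1.
Proof.
elim: l => [//|[|l] IHl] /andP[_ l_le] //.
apply: (leq_trans (a_noninc l.+1 _) (IHl _)); lia.
Qed.

Lemma prod_rest_Delta :
  \prod_(1 <= l < t.+1 | (l != 1) && (l != i)) (a l)`! = Delta m1 k1 * Delta m2 k2.
Proof.
have := prod_fact; rewrite (big_nat_D2 _ _ _ 1 t.+1 1 i) /=; try lia.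
rewrite -{1}(subnKC (ltnW a1_lt_n1)) -{1}(subnKC (ltnW ai_lt_n2)) !fact_addn_Delta.
by rewrite mulnA mulnACA => /eqP; rewrite eqn_pmul2l ?muln_gt0 ?fact_gt0 // => /eqP.
Qed.

Lemma not_prime_Delta_m1_factor (j : nat) : j < k1 -> ~~ prime (m1 + j).
Proof.
move=> j_lt; apply/negP => p_pr.
have : m1 + j %| \prod_(1 <= l < t.+1) (a l)`!.
  by rewrite prod_fact dvdn_mulr // prime_dvd_fact //; lia.
rewrite Euclid_dvd_prod // big_has => /hasP[l]; rewrite mem_index_iota => l_range.
by rewrite prime_dvd_fact // => le_al; have := a_le_a1 l ltac:(lia); lia.
Qed.

Lemma fact_amax_leq : amax`! <= expn (2 * m1) (k1 + k2).
Proof.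
have amax_le : amax <= a 1.
  by apply/bigmax_leqP_seq => l; rewrite mem_index_iota => l_range _; apply: a_le_a1; lia.
apply: fact_leq_expn_of_large; [lia | lia | move=> large].
apply: leq_trans (fact_bigmax_leq_prod _ _ _ _) _.
rewrite prod_rest_Delta expnD; apply: leq_mul; apply: Delta_leq_expn => j j_lt.
  by lia.
by have := a_le_a1 i ltac:(lia); lia.
Qed.

End FactorialIdentity.

Theorem lemma2p2 (t : nat) (a : nat -> nat) (n1 n2 i : nat) :
  3 <= t ->
  (forall l, 1 <= l < t -> a l.+1 <= a l) ->
  2 <= a t ->
  2 <= n2 <= n1 ->
  (forall l, 1 <= l <= t -> a l != n1 /\ a l != n2) ->
  \prod_(1 <= l < t.+1) (a l)`! = n1`! * n2`! ->
  a 1 < n1 ->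
  2 <= i <= t ->
  a i < n2 ->
  let m1 := (a 1).+1 in
  let k1 := n1 - a 1 in
  let m2 := (a i).+1 in
  let k2 := n2 - a i in
  let amax := \max_(1 <= l < t.+1 | (l != 1) && (l != i)) a l in
  (forall j, j < k1 -> ~~ prime (m1 + j)) /\
  (INR amax * ln (INR amax) - INR amax <= ln (INR amax`!) /\
   ln (INR amax`!) <= INR (k1 + k2) * ln (2 * INR m1))%R.
Proof.
move=> _ a_noninc _ _ _ prod_fact a1_lt_n1 i_range ai_lt_n2 m1 k1 m2 k2 amax.
split; first exact: not_prime_Delta_m1_factor a_noninc prod_fact a1_lt_n1 i_range ai_lt_n2.
split; first exact: ln_fact_ge.
have -> : (2 * INR m1)%R = INR (2 * m1) by rewrite mulnE mult_INR /=; lra.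
apply: ln_INR_le_expn; [exact: fact_gt0 | by rewrite /m1; lia |].
exact: fact_amax_leq a_noninc prod_fact a1_lt_n1 i_range ai_lt_n2.
Qed.
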